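(* Let $q$ be a prime power and let $C\subseteq\mathrm{GF}(q^m)^n$ be a (linear or nonlinear) code with $n\le m$, $|C|=q^{mk}$ for an integer $1\le k\le n$, and minimum rank distance $d_{\mathrm R}=n-k+1$. Let $k\le v\le n$, let $\mathbf B$ be a $v\times n$ matrix and $\bar{\mathbf B}$ an $(n-v)\times n$ matrix over $\mathrm{GF}(q)$ such that the matrix obtained by stacking $\mathbf B$ above $\bar{\mathbf B}$ is invertible, and let $\mathcal V,\bar{\mathcal V}$ be their $\mathrm{GF}(q^m)$-row spans. Then the restriction $C_{\mathcal V}=\{r_{\mathcal V}(\mathbf c):\mathbf c\in C\}\subseteq\mathrm{GF}(q^m)^v$ is a code of length $v$ and cardinality $q^{mk}$ with minimum rank distance $v-k+1$ (i.e., an MRD code).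
   Context: For a vector $\mathbf x$ over $\mathrm{GF}(q^m)$, $\mathrm{rk}(\mathbf x)$ is the dimension over $\mathrm{GF}(q)$ of the $\mathrm{GF}(q)$-span of its coordinates; the minimum rank distance of a code is the minimum of $\mathrm{rk}(\mathbf c-\mathbf d)$ over distinct codewords. Every $\mathbf x\in\mathrm{GF}(q^m)^n$ decomposes uniquely as $\mathbf x=\mathbf a\mathbf B+\mathbf b\bar{\mathbf B}$ with $\mathbf a\in\mathrm{GF}(q^m)^v$, $\mathbf b\in\mathrm{GF}(q^m)^{n-v}$; here $\mathbf a\mathbf B=\mathbf x_{\mathcal V}$ is the projection of $\mathbf x$ onto $\mathcal V$ along $\bar{\mathcal V}$, and $r_{\mathcal V}(\mathbf x)=\mathbf a$ (equivalently $\mathbf x_{\mathcal V}\mathbf B^{-R}$ for a right inverse $\mathbf B^{-R}$ of $\mathbf B$). *)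

From HB Require Import structures.
From mathcomp Require Import all_boot all_order all_algebra all_field.
Set Implicit Arguments. Unset Strict Implicit. Unset Printing Implicit Defensive.
Import GRing.Theory.
Local Open Scope ring_scope.

(* GF(q) is a finite field F; GF(q^m) is a finite-dimensional field extension
   L of F, with m = \dim {:L}.  [finvect_type L] is L equipped with its
   canonical finite type structure (F is finite). *)
Notation ext L := (finvect_type L).

Definition rk (F : finFieldType) (L : fieldExtType F) (n : nat) (x : 'rV[ext L]_n) : nat :=
  \dim (span [seq (x ord0 i : L) | i <- enum 'I_n]).

Definition min_rank_dist (F : finFieldType) (L : fieldExtType F) (n : nat)
    (C : {set 'rV[ext L]_n}) (d : nat) : Prop :=
  (exists c1 c2, [/\ c1 \in C, c2 \in C, c1 != c2 & rk (c1 - c2) = d]) /\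
  (forall c1 c2, c1 \in C -> c2 \in C -> c1 != c2 -> (d <= rk (c1 - c2))%N).

Definition liftmx (F : finFieldType) (L : fieldExtType F) (r n : nat) (M : 'M[F]_(r, n))
  : 'M[ext L]_(r, n) := map_mx (in_alg (ext L)) M.

(* The restriction C_V = { r_V(c) : c in C }, where r_V(x) is the unique a with
   x = a B + b Bbar. *)
Definition restr (F : finFieldType) (L : fieldExtType F) (n v : nat)
    (C : {set 'rV[ext L]_n}) (B : 'M[F]_(v, n)) (Bbar : 'M[F]_(n - v, n))
  : {set 'rV[ext L]_v} :=
  [set a | [exists c in C, exists b : 'rV[ext L]_(n - v),
              c == a *m liftmx L B + b *m liftmx L Bbar]].

From HB Require Import structures.
From mathcomp Require Import all_boot all_order all_algebra all_field.
From mathcomp Require Import zify.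
Set Implicit Arguments. Unset Strict Implicit. Unset Printing Implicit Defensive.
Import GRing.Theory.
Local Open Scope ring_scope.

(* Since the stacked matrix [B; Bbar] is invertible over F, every word splits
   uniquely as c = a B + b Bbar with a = r_V(c).  The F-span of the coordinates
   of a B lies in that of a, so rk(c - c') <= rk(r_V c - r_V c') + (n - v).
   As the distances of C are at least n - k + 1 > n - v, r_V is injective on C
   and the distances of C_V are at least v - k + 1.  Conversely, two of the
   q^(mk) words of C_V agree on their first k - 1 coordinates (pigeonhole), and
   their difference has rank at most v - k + 1: this is the Singleton bound. *)

Lemma card_ord_geq v j : #|[set i : 'I_v | (j <= i)%N]| = (v - j)%N.
Proof.
rewrite -sum1_card -[RHS]muln1 -sum_nat_const_nat big_geq_mkord.
by apply: eq_bigl => i; rewrite inE.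
Qed.

Section Rank.
Variables (F : finFieldType) (L : fieldExtType F).

Lemma card_ext : #|ext L| = (#|F| ^ \dim {:L})%N.
Proof. by rewrite -(@card_vspacef F (ext L) (Vector.class (ext L))) card_vspace. Qed.

Lemma rk_leq_dim n (x : 'rV[ext L]_n) (U : {vspace L}) :
  (forall i, (x ord0 i : L) \in U) -> (rk x <= \dim U)%N.
Proof. by move=> xU; apply/dimvS/span_subvP => _ /mapP[i _ ->]. Qed.

Lemma rk_leq_card n (x : 'rV[ext L]_n) (S : {set 'I_n}) :
  (forall i, i \notin S -> x ord0 i = 0) -> (rk x <= #|S|)%N.
Proof.
move=> xS; pose U := span [seq (x ord0 i : L) | i <- enum S].
apply: (@leq_trans (\dim U)).
  apply: rk_leq_dim => i; have [iS | /xS ->] := boolP (i \in S); last exact: mem0v.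
  by apply/memv_span/map_f; rewrite mem_enum.
by rewrite (leq_trans (dim_span _)) // size_map -cardE.
Qed.

Lemma rk0 n : rk (0 : 'rV[ext L]_n) = 0%N.
Proof.
apply/eqP; rewrite -leqn0 (leq_trans (rk_leq_card (S := set0) _)) ?cards0 //.
by move=> i _; rewrite mxE.
Qed.

Lemma rk_leq_size n (x : 'rV[ext L]_n) : (rk x <= n)%N.
Proof.
by rewrite (leq_trans (rk_leq_card (S := setT) _)) ?cardsT ?card_ord // => i; rewrite inE.
Qed.

Lemma rkD n (x y : 'rV[ext L]_n) : (rk (x + y) <= rk x + rk y)%N.
Proof.
pose sp (z : 'rV[ext L]_n) := span [seq (z ord0 i : L) | i <- enum 'I_n].
have mem_sp (z : 'rV[ext L]_n) i : (z ord0 i : L) \in sp z.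
  by apply/memv_span/map_f; rewrite mem_enum.
apply: (@leq_trans (\dim (sp x + sp y))); last by case: (dimv_add_leqif (sp x) (sp y)).
by apply: rk_leq_dim => i; rewrite mxE memv_add.
Qed.

Lemma rk_mul_liftmx v n (a : 'rV[ext L]_v) (M : 'M[F]_(v, n)) :
  (rk (a *m liftmx L M) <= rk a)%N.
Proof.
apply: rk_leq_dim => j; rewrite mxE; apply: memv_suml => i _.
rewrite mxE -[X in X \in _]/(_ * in_alg (ext L) (M i j) : L) mulr_algr.
by apply/memvZ/memv_span/map_f; rewrite mem_enum.
Qed.

End Rank.

Section Singleton.
Variables (F : finFieldType) (L : fieldExtType F).

Lemma rk_leq_vanishing_prefix v j (x : 'rV[ext L]_v) :
  (forall i : 'I_v, (i < j)%N -> x ord0 i = 0) -> (rk x <= v - j)%N.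
Proof.
move=> x0; rewrite -card_ord_geq rk_leq_card // => i.
by rewrite inE -ltnNge => /x0.
Qed.

Lemma exists_pair_rk_leq v j (R : {set 'rV[ext L]_v}) :
  (j <= v)%N -> (#|ext L| ^ j < #|R|)%N ->
  exists a1 a2, [/\ a1 \in R, a2 \in R, a1 != a2 & (rk (a1 - a2) <= v - j)%N].
Proof.
move=> le_jv ltR.
pose prefix (a : 'rV[ext L]_v) : 'rV[ext L]_j := \row_i a ord0 (widen_ord le_jv i).
have /dinjectivePn[a1 a1R [a2 /andP[a21 a2R] eq_prefix]] : ~~ dinjectiveb prefix R.
  apply: contraTN ltR => /dinjectiveP/card_in_imset <-.
  by rewrite -leqNgt (leq_trans (max_card _)) // card_mx mul1n.
exists a1, a2; split; rewrite 1?eq_sym //.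
apply: rk_leq_vanishing_prefix => i lt_ij.
have -> : i = widen_ord le_jv (Ordinal lt_ij) by apply: val_inj.
by have /rowP/(_ (Ordinal lt_ij)) := eq_prefix; rewrite !mxE => ->; rewrite subrr.
Qed.

Lemma MRD_of_rk_lower_bound v k (R : {set 'rV[ext L]_v}) :
  (1 <= k <= v)%N -> #|R| = (#|ext L| ^ k)%N ->
  (forall a1 a2, a1 \in R -> a2 \in R -> a1 != a2 -> (v - k + 1 <= rk (a1 - a2))%N) ->
  min_rank_dist R (v - k + 1).
Proof.
move=> /andP[k_gt0 le_kv] cardR lower; split => //.
have le_k1v : (k.-1 <= v)%N by lia.
have ltR : (#|ext L| ^ k.-1 < #|R|)%N.
  by rewrite cardR ltn_exp2l ?finNzRing_gt1 //; lia.
have [a1 [a2 [a1R a2R a12 upper]]] := exists_pair_rk_leq le_k1v ltR.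
exists a1, a2; split=> //; apply/eqP; rewrite eqn_leq lower // andbT.
by apply: leq_trans upper _; lia.
Qed.

End Singleton.

Section Restriction.
Variables (F : finFieldType) (L : fieldExtType F) (n v : nat).
Variables (B : 'M[F]_(v, n)) (Bbar : 'M[F]_(n - v, n)) (le_vn : (v <= n)%N).
Hypothesis stack_unit : castmx (subnKC le_vn, erefl n) (col_mx B Bbar) \in unitmx.

Local Notation lift M := (liftmx L M).
Local Notation P := (lift (col_mx B Bbar)).

Lemma liftmx_col_mx : P = col_mx (lift B) (lift Bbar).
Proof. exact: map_col_mx. Qed.

Lemma row_free_lift_stack : row_free P.
Proof.
rewrite /row_free mxrank_map -/(row_free _).
by rewrite -(row_free_castmx _ (subnKC le_vn, erefl n)) row_free_unit.
Qed.

Lemma row_full_lift_stack : row_full P.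
Proof.
rewrite /row_full mxrank_map -/(row_full _).
by rewrite -(row_full_castmx _ (subnKC le_vn, erefl n)) row_full_unit.
Qed.

Definition restr_coord (c : 'rV[ext L]_n) : 'rV[ext L]_v := lsubmx (c *m pinvmx P).

Lemma restr_coord_decomp c :
  c = restr_coord c *m lift B + rsubmx (c *m pinvmx P) *m lift Bbar.
Proof.
rewrite -mul_row_col hsubmxK -liftmx_col_mx mulmxKpV //.
exact/submx_full/row_full_lift_stack.
Qed.

Lemma decomp_coord_inj (a a' : 'rV[ext L]_v) (b b' : 'rV[ext L]_(n - v)) :
  a *m lift B + b *m lift Bbar = a' *m lift B + b' *m lift Bbar -> a = a'.
Proof.
rewrite -!mul_row_col -liftmx_col_mx => /(row_free_inj row_free_lift_stack).
by case/eq_row_mx.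
Qed.

Lemma restrE C : restr C B Bbar = restr_coord @: C.
Proof.
apply/setP => a; rewrite inE; apply/existsP/imsetP.
  case=> c /andP[cC /existsP[b /eqP c_ab]]; exists c => //.
  exact: decomp_coord_inj (etrans (esym c_ab) (restr_coord_decomp c)).
case=> c cC ->; exists c; rewrite cC; apply/existsP; exists (rsubmx (c *m pinvmx P)).
exact/eqP/restr_coord_decomp.
Qed.

Lemma rk_sub_leq_restr c1 c2 :
  (rk (c1 - c2) <= rk (restr_coord c1 - restr_coord c2) + (n - v))%N.
Proof.
rewrite [c1 in c1 - _]restr_coord_decomp [c2 in _ - c2]restr_coord_decomp.
rewrite opprD addrACA -!mulmxBl (leq_trans (rkD _ _)) // leq_add ?rk_mul_liftmx //.
exact: leq_trans (rk_mul_liftmx _ _) (rk_leq_size _).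
Qed.

End Restriction.

Theorem lemma7 (F : finFieldType) (L : fieldExtType F) (n k v : nat)
  (C : {set 'rV[ext L]_n}) (B : 'M[F]_(v, n)) (Bbar : 'M[F]_(n - v, n))
  (Hvn : (v <= n)%N) :
  (n <= \dim {:L})%N ->
  (1 <= k <= n)%N ->
  #|C| = (#|F| ^ (\dim {:L} * k))%N ->
  min_rank_dist C (n - k + 1) ->
  (k <= v)%N ->
  castmx (subnKC Hvn, erefl n) (col_mx B Bbar) \in unitmx ->
  #|restr C B Bbar| = (#|F| ^ (\dim {:L} * k))%N /\
  min_rank_dist (restr C B Bbar) (v - k + 1).
Proof.
move=> _ /andP[k_gt0 _] cardC [_ minC] le_kv stack_unit.
have far c1 c2 : c1 \in C -> c2 \in C -> c1 != c2 ->
    (v - k + 1 <= rk (restr_coord B Bbar c1 - restr_coord B Bbar c2))%N.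
  move=> c1C c2C c12.
  have := leq_trans (minC _ _ c1C c2C c12) (rk_sub_leq_restr stack_unit c1 c2).
  by move: (rk _); clear -Hvn le_kv; lia.
have r_inj : {in C &, injective (restr_coord B Bbar)}.
  move=> c1 c2 c1C c2C r12; apply/eqP/negPn/negP => /(far _ _ c1C c2C).
  by rewrite r12 subrr rk0 addn1.
have cardR : #|restr C B Bbar| = (#|F| ^ (\dim {:L} * k))%N.
  by rewrite (restrE stack_unit) card_in_imset.
split=> //; apply: MRD_of_rk_lower_bound; first by rewrite k_gt0.
  by rewrite cardR card_ext expnM.
rewrite (restrE stack_unit) => _ _ /imsetP[c1 c1C ->] /imsetP[c2 c2C ->] r12.
by apply: far => //; apply: contraNneq r12 => ->.
Qed.
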